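(* Let $(\alpha_1,\alpha_2)\in\mathbb{C}^2$ and $p_1,p_2\in\mathbb{C}[u]\setminus\{0\}$ with $p_1(u+\alpha_2/2)p_2(u+\alpha_1/2)=p_1(u-\alpha_2/2)p_2(u-\alpha_1/2)$. Then the noncommutative Kleinian fiber product $\mathcal{A}_{\alpha_1,\alpha_2}(p_1,p_2)$, with its $\mathbb{Z}^2$-gradation, is a crystalline graded ring.
   Context: $\tilde{\mathcal{A}}_{\alpha_1,\alpha_2}(p_1,p_2)$ is the $\mathbb{C}$-algebra generated by $H,X_1^\pm,X_2^\pm$ with relations ($i=1,2$) $HX_i^\pm-X_i^\pm H=\pm\alpha_iX_i^\pm$, $X_i^+X_i^-=p_i(H-\alpha_i/2)$, $X_i^-X_i^+=p_i(H+\alpha_i/2)$, $X_1^+X_2^-=X_2^-X_1^+$, $X_1^-X_2^+=X_2^+X_1^-$; $\mathcal{A}_{\alpha_1,\alpha_2}(p_1,p_2)$ is its quotient by the ideal of all $a$ with $f(H)a=0$ for some nonzero polynomial $f$. It is $\mathbb{Z}^2$-graded by $\deg H=0$, $\deg X_i^\pm=\pm\mathbf{e}_i$, with degree-zero component $\mathbb{C}[H]$. A group-graded ring $D=\bigoplus_gD_g$ is crystalline graded if each $D_g$ is free of rank one as a left and as a right $D_e$-module on a common generator $a_g\in D_g$. *)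

From HB Require Import structures.
From mathcomp Require Import all_boot all_algebra.
From mathcomp Require Import reals.
From mathcomp.real_closed Require Import complex.
From mathcomp.multinomials Require Import monalg.

Set Implicit Arguments.
Unset Strict Implicit.
Unset Printing Implicit Defensive.
Import GRing.Theory.
Local Open Scope ring_scope.

(* The free associative C-algebra on five generators, indexed by 'I_5:     *)
(*   0 = H, 1 = X_1^+, 2 = X_1^-, 3 = X_2^+, 4 = X_2^-.                    *)
Definition FreeAlg (R : realType) := {malg (complex R)[{fmonom 'I_5}]}.

Definition gen (R : realType) (i : 'I_5) : FreeAlg R := << fmu i >>.

Definition gH  (R : realType) : FreeAlg R := gen R (@Ordinal 5 0 isT).
Definition gX1p (R : realType) : FreeAlg R := gen R (@Ordinal 5 1 isT).
Definition gX1m (R : realType) : FreeAlg R := gen R (@Ordinal 5 2 isT).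
Definition gX2p (R : realType) : FreeAlg R := gen R (@Ordinal 5 3 isT).
Definition gX2m (R : realType) : FreeAlg R := gen R (@Ordinal 5 4 isT).

Definition peval (R : realType) (p : {poly complex R}) (x : FreeAlg R)
  : FreeAlg R := \sum_(i < size p) p`_i *: x ^+ i.

(* The ten defining relations of \tilde{A}_{a1,a2}(p1,p2), as elements     *)
(* r of the free algebra (the relation being r = 0).                       *)
Definition rel (R : realType) (a1 a2 : complex R) (p1 p2 : {poly complex R})
  (k : 'I_10) : FreeAlg R :=
  let H := gH R in
  let X1p := gX1p R in let X1m := gX1m R in
  let X2p := gX2p R in let X2m := gX2m R in
  match val k with
  | 0 => H * X1p - X1p * H - a1 *: X1p
  | 1 => H * X1m - X1m * H + a1 *: X1m
  | 2 => H * X2p - X2p * H - a2 *: X2p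
  | 3 => H * X2m - X2m * H + a2 *: X2m
  | 4 => X1p * X1m - peval p1 (H - (a1 / 2%:R) *: 1)
  | 5 => X1m * X1p - peval p1 (H + (a1 / 2%:R) *: 1)
  | 6 => X2p * X2m - peval p2 (H - (a2 / 2%:R) *: 1)
  | 7 => X2m * X2p - peval p2 (H + (a2 / 2%:R) *: 1)
  | 8 => X1p * X2m - X2m * X1p
  | _ => X1m * X2p - X2p * X1m
  end.

(* a * r_k * b.  Its quotient is \tilde{A}_{a1,a2}(p1,p2).                 *)
Definition relIdeal (R : realType) (a1 a2 : complex R) (p1 p2 : {poly complex R})
  (x : FreeAlg R) : Prop :=
  exists s : seq (FreeAlg R * 'I_10 * FreeAlg R),
    x = \sum_(t <- s) (t.1.1 * rel a1 a2 p1 p2 t.1.2 * t.2).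

(* Preimage in the free algebra of the ideal of \tilde A consisting of     *)
(* all a with f(H) a = 0 for some nonzero polynomial f.  The quotient of   *)
(* the free algebra by this ideal is A_{a1,a2}(p1,p2).                     *)
Definition torsIdeal (R : realType) (a1 a2 : complex R) (p1 p2 : {poly complex R})
  (x : FreeAlg R) : Prop :=
  exists f : {poly complex R},
    f != 0 /\ relIdeal a1 a2 p1 p2 (peval f (gH R) * x).

Definition wdeg (m : {fmonom 'I_5}) : int * int :=
  ((count (fun i : 'I_5 => val i == 1%N) m)%:Z
     - (count (fun i : 'I_5 => val i == 2%N) m)%:Z,
   (count (fun i : 'I_5 => val i == 3%N) m)%:Z
     - (count (fun i : 'I_5 => val i == 4%N) m)%:Z).

(* component D_g of the quotient is the image of these elements.           *)
Definition homog (R : realType) (g : int * int) (x : FreeAlg R) : Prop :=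
  forall m : {fmonom 'I_5}, x@_m != 0 -> wdeg m = g.

(* Crystalline gradedness of D = FreeAlg / J (J = torsIdeal) w.r.t. the    *)
(* Z^2-grading above, expressed on representatives: for every g there is   *)
(* a_g in D_g such that d |-> d a_g and d |-> a_g d are bijections         *)
(* D_e -> D_g (i.e. D_g is free of rank one as left and as right           *)
(* D_e-module on the common generator a_g).                                *)
Definition crystalline_quot (R : realType) (J : FreeAlg R -> Prop) : Prop :=
  forall g : int * int, exists a : FreeAlg R,
    [/\ homog g a,
        forall b, homog g b -> exists c, homog (0, 0) c /\ J (b - c * a),
        forall c, homog (0, 0) c -> J (c * a) -> J c,
        forall b, homog g b -> exists c, homog (0, 0) c /\ J (b - a * c)
      & forall c, homog (0, 0) c -> J (a * c) -> J c].

From Pilot Require Import Defs.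
From HB Require Import structures.
From mathcomp Require Import all_boot all_order all_algebra.
From mathcomp Require Import reals.
From mathcomp.real_closed Require Import complex.
From mathcomp.multinomials Require Import monalg.
From mathcomp Require Import zify.
From Stdlib Require Import Classical.

(* Each generator Z satisfies
   H Z = Z (H + c) for a scalar c, so a polynomial in H moves across a
   homogeneous element at the cost of shifting its variable; hence nonzero
   polynomials in H cancel on either side modulo H-torsion.  Using
   X_i^+ X_i^-, X_i^- X_i^+ in C[H] and the two commutation relations, every
   word of degree g = (m, n) reduces to a C[H]-combination of words in the
   letters X_1^{sgn m} and X_2^{sgn n} only; in particular D_0 is spanned by
   C[H].  For x = (X_1^{sgn m})^|m| (X_2^{sgn n})^|n| and the reverse inverse
   word y, both x y and y x are nonzero polynomials in H.  The r such that
   b y = r(H) for some b in D_g form an ideal of C[u]; an element a realising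
   a generator d spans D_g as a left C[H]-module (divide r by d, then cancel y
   against y x) and as a right one (shift polynomials across a), freely on both
   sides (cancel a y = d(H), resp. x = e(H) a). *)

Set Implicit Arguments.
Unset Strict Implicit.
Unset Printing Implicit Defensive.
Import Order.TTheory GRing.Theory Num.Theory.
Local Open Scope ring_scope.

Lemma comp_XsubC_eq0 (K : idomainType) (f : {poly K}) (c : K) :
  (f \Po ('X - c%:P) == 0) = (f == 0).
Proof. by rewrite comp_poly2_eq0 ?size_XsubC. Qed.

Lemma comp_XaddC_eq0 (K : idomainType) (f : {poly K}) (c : K) :
  (f \Po ('X + c%:P) == 0) = (f == 0).
Proof. by rewrite comp_poly2_eq0 ?size_XaddC. Qed.

Lemma poly_ideal_principal (K : fieldType) (P : {poly K} -> Prop) :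
  (forall r1 r2 e, P r1 -> P r2 -> P (r1 - e * r2)) ->
  forall q, q != 0 -> P q -> exists2 d, d != 0 /\ P d & forall r, P r -> d %| r.
Proof.
move=> Psub q; move: {2}(size q) (leqnn (size q)) => n.
elim: n q => [|n IHn] q size_q q0 Pq.
  by move: q0; rewrite -size_poly_eq0 -leqn0 size_q.
case: (classic (forall r, P r -> q %| r)) => [dvd_q | /not_all_ex_not[r]].
  by exists q.
move=> /(imply_to_and (P r)) [Pr ndvd].
have Pmod : P (r %% q).
  by have := Psub r q (r %/ q) Pr Pq; rewrite {1}(divp_eq r q) addrC addKr.
have mod0 : r %% q != 0 by apply/negP => /eqP mod0; apply: ndvd; rewrite /dvdp mod0.
apply: (IHn (r %% q)) => //.
by rewrite -ltnS (leq_trans _ size_q) // ltn_modp.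
Qed.

Lemma mem_count_id s : (0 < count id s)%N -> true \in s.
Proof. by rewrite -has_count => /hasP[[] ? ?]. Qed.

Lemma mem_count_negb s : (0 < count negb s)%N -> false \in s.
Proof. by rewrite -has_count => /hasP[[] ? ?]. Qed.

Lemma split_last_occurrence (b : bool) s :
  b \in s -> exists s1 k, s = s1 ++ b :: nseq k (~~ b).
Proof.
elim/last_ind: s => [|s c IHs] //; rewrite mem_rcons in_cons.
case: (eqVneq b c) => [bc _ | neq_bc /= /IHs [s1 [k ->]]].
  by exists s, 0%N; rewrite cats1 bc.
have -> : c = ~~ b by clear IHs; move: neq_bc; case: b c => [] [].
exists s1, k.+1; rewrite rcons_cat /=; congr (_ ++ _ :: _).
by elim: k => //= k ->.
Qed.

Section CongruenceModIdeal.
Variables (K : fieldType) (A : algType K) (I : A -> Prop).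
Hypothesis ideal0 : I 0.
Hypothesis idealD : forall x y, I x -> I y -> I (x + y).
Hypothesis idealMl : forall z x, I x -> I (z * x).
Hypothesis idealMr : forall x z, I x -> I (x * z).

Lemma idealN x : I x -> I (- x).
Proof. by rewrite -mulN1r; apply: idealMl. Qed.

Definition eqmod x y := I (x - y).
Local Notation "x ≡ y" := (eqmod x y) (at level 70, no associativity).

Lemma eqmodxx x : x ≡ x.
Proof. by rewrite /eqmod subrr. Qed.

Lemma eq_eqmod x y : x = y -> x ≡ y.
Proof. by move=> ->; apply: eqmodxx. Qed.

Lemma eqmod_sym x y : x ≡ y -> y ≡ x.
Proof. by move=> /idealN; rewrite opprB. Qed.

Lemma eqmod_trans y x z : x ≡ y -> y ≡ z -> x ≡ z.
Proof. by rewrite /eqmod => Ixy /(idealD Ixy); rewrite addrA subrK. Qed.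

Lemma eqmodD x y x' y' : x ≡ y -> x' ≡ y' -> x + x' ≡ y + y'.
Proof. by rewrite /eqmod => Ixy /(idealD Ixy); rewrite addrACA -opprD. Qed.

Lemma eqmodN x y : x ≡ y -> - x ≡ - y.
Proof. by move=> /idealN; rewrite /eqmod opprD. Qed.

Lemma eqmodB x y x' y' : x ≡ y -> x' ≡ y' -> x - x' ≡ y - y'.
Proof. by move=> exy /eqmodN; apply: eqmodD. Qed.

Lemma eqmodMl z x y : x ≡ y -> z * x ≡ z * y.
Proof. by rewrite /eqmod -mulrBr; apply: idealMl. Qed.

Lemma eqmodMr z x y : x ≡ y -> x * z ≡ y * z.
Proof. by rewrite /eqmod -mulrBl; apply: idealMr. Qed.

Lemma eqmodZ c x y : x ≡ y -> c *: x ≡ c *: y.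
Proof. by rewrite /eqmod -scalerBr -mulr_algl; apply: idealMl. Qed.

Lemma eqmod_ideal x y : x ≡ y -> I y -> I x.
Proof. by rewrite /eqmod => Ixy /(idealD Ixy); rewrite subrK. Qed.

Section AdjointEigen.
Variable H : A.
Local Notation phi := (horner_alg H).

Lemma hornerH_comm p q : phi p * phi q = phi q * phi p.
Proof. by rewrite -!rmorphM mulrC. Qed.

Definition ad_eigen c z := H * z ≡ z * H + c *: z.

Lemma ad_eigen_hornerl c z : ad_eigen c z ->
  forall q, phi q * z ≡ z * phi (q \Po ('X + c%:P)).
Proof.
move=> ez; elim/poly_ind => [|q k IHq].
  by rewrite comp_poly0 !rmorph0 mul0r mulr0; apply: eqmodxx.
rewrite comp_polyD comp_polyM comp_polyX comp_polyC !rmorphD !rmorphM /=.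
rewrite !horner_algX !horner_algC rmorphD /= horner_algX horner_algC.
rewrite mulrDl mulr_algl -mulrA mulrDr mulr_algr; apply: eqmodD (eqmodxx _).
apply: eqmod_trans (eqmodMl _ ez) _.
rewrite !mulrDr mulr_algr -!scalerAr !mulrA.
by apply: eqmodD; [apply: eqmodMr | apply: eqmodZ].
Qed.

Lemma ad_eigen_hornerr c z : ad_eigen c z ->
  forall q, z * phi q ≡ phi (q \Po ('X - c%:P)) * z.
Proof.
move=> ez q; apply: eqmod_sym; have := ad_eigen_hornerl ez (q \Po ('X - c%:P)).
by rewrite -comp_polyA comp_polyB comp_polyX comp_polyC addrK comp_polyXr.
Qed.

Lemma ad_eigen0 c : ad_eigen c 0.
Proof. by apply: eq_eqmod; rewrite mulr0 mul0r scaler0 addr0. Qed.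

Lemma ad_eigen1 : ad_eigen 0 1.
Proof. by apply: eq_eqmod; rewrite mulr1 mul1r scale0r addr0. Qed.

Lemma ad_eigenH : ad_eigen 0 H.
Proof. by apply: eq_eqmod; rewrite scale0r addr0. Qed.

Lemma ad_eigenD c x y : ad_eigen c x -> ad_eigen c y -> ad_eigen c (x + y).
Proof.
move=> ex ey; rewrite /ad_eigen mulrDr; apply: eqmod_trans (eqmodD ex ey) _.
by apply: eq_eqmod; rewrite mulrDl scalerDr addrACA.
Qed.

Lemma ad_eigenZ c k x : ad_eigen c x -> ad_eigen c (k *: x).
Proof.
move=> ex; rewrite /ad_eigen -scalerAr; apply: eqmod_trans (eqmodZ k ex) _.
by apply: eq_eqmod; rewrite scalerDr -scalerAl !scalerA mulrC.
Qed.

Lemma ad_eigenM c1 c2 x y :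
  ad_eigen c1 x -> ad_eigen c2 y -> ad_eigen (c1 + c2) (x * y).
Proof.
move=> ex ey; rewrite /ad_eigen mulrA; apply: eqmod_trans (eqmodMr y ex) _.
rewrite mulrDl -scalerAl -[x * H * y]mulrA.
apply: eqmod_trans (eqmodD (eqmodMl x ey) (eqmodxx _)) _.
by apply: eq_eqmod; rewrite mulrDr mulrA -scalerAr scalerDl addrA addrAC.
Qed.

Lemma ad_eigenX c x k : ad_eigen c x -> ad_eigen (c *+ k) (x ^+ k).
Proof.
move=> ex; elim: k => [|k IHk]; first by rewrite expr0 mulr0n; apply: ad_eigen1.
by rewrite exprS mulrS; apply: ad_eigenM.
Qed.

Definition torsion x := exists2 f, f != 0 & I (phi f * x).

Lemma ideal_torsion x : I x -> torsion x.
Proof. by exists 1; rewrite ?oner_eq0 // rmorph1 mul1r. Qed.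

Lemma torsionD x y : torsion x -> torsion y -> torsion (x + y).
Proof.
move=> [f f0 Ifx] [g g0 Igy]; exists (f * g); first by rewrite mulf_neq0.
rewrite rmorphM mulrDr; apply: idealD; last by rewrite -mulrA; apply: idealMl.
by rewrite hornerH_comm -mulrA; apply: idealMl.
Qed.

Lemma torsionN x : torsion x -> torsion (- x).
Proof. by move=> [f f0 Ifx]; exists f; rewrite // mulrN; apply: idealN. Qed.

Lemma torsionMr x z : torsion x -> torsion (x * z).
Proof. by move=> [f f0 Ifx]; exists f; rewrite // mulrA; apply: idealMr. Qed.

Lemma torsion_hornerMl q x : torsion x -> torsion (phi q * x).
Proof.
move=> [f f0 Ifx]; exists f; rewrite // mulrA hornerH_comm -mulrA.
exact: idealMl.
Qed.

Lemma torsion_eigenMl c z x : ad_eigen c z -> torsion x -> torsion (z * x).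
Proof.
move=> ez [f f0 Ifx]; exists (f \Po ('X - c%:P)); first by rewrite comp_XsubC_eq0.
rewrite mulrA; apply: eqmod_ideal (eqmodMr x (eqmod_sym (ad_eigen_hornerr ez f))) _.
by rewrite -mulrA; apply: idealMl.
Qed.

Lemma torsion_eqmod x y : torsion x -> x ≡ y -> torsion y.
Proof.
move=> tx exy; rewrite -[y](subKr x); apply: torsionD tx _.
by apply: torsionN; apply: ideal_torsion.
Qed.

Lemma torsion_hornerMlK f x : f != 0 -> torsion (phi f * x) -> torsion x.
Proof.
move=> f0 [g g0 Igfx]; exists (g * f); first by rewrite mulf_neq0.
by rewrite rmorphM -mulrA.
Qed.

Lemma torsion_hornerMrK c f x :
  ad_eigen c x -> f != 0 -> torsion (x * phi f) -> torsion x.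
Proof.
move=> ex f0 tx; apply: (@torsion_hornerMlK (f \Po ('X - c%:P))).
  by rewrite comp_XsubC_eq0.
exact: torsion_eqmod tx (ad_eigen_hornerr ex f).
Qed.

Definition word (la lb : A) (s : seq bool) := \prod_(b <- s) (if b then la else lb).

Lemma word_rcons la lb s b :
  word la lb (rcons s b) = word la lb s * (if b then la else lb).
Proof. by rewrite /word -cats1 big_cat big_seq1. Qed.

Lemma word_cat la lb s1 s2 : word la lb (s1 ++ s2) = word la lb s1 * word la lb s2.
Proof. by rewrite /word big_cat. Qed.

Lemma word_cons la lb s b : word la lb (b :: s) = (if b then la else lb) * word la lb s.
Proof. by rewrite /word big_cons. Qed.

Lemma word_nseq la lb k b : word la lb (nseq k b) = (if b then la else lb) ^+ k.
Proof.
by elim: k => [|k IHk]; rewrite ?expr0 /word ?big_nil //= big_cons exprS -IHk.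
Qed.

Lemma eq_word la lb la' lb' s :
  (count id s = 0%N \/ la = la') -> (count negb s = 0%N \/ lb = lb') ->
  word la lb s = word la' lb' s.
Proof.
elim: s => [|[] s IHs] ea eb; rewrite ?word_cons; first by rewrite /word !big_nil.
  have {}ea : la = la' by case: ea.
  by rewrite (IHs (or_intror ea) eb) ea.
have {}eb : lb = lb' by case: eb.
by rewrite (IHs ea (or_intror eb)) eb.
Qed.

Lemma word_eigen la lb ca cb s :
  ad_eigen ca la -> ad_eigen cb lb -> exists c, ad_eigen c (word la lb s).
Proof.
move=> ea eb; elim: s => [|[] s [c ec]]; rewrite ?word_cons.
- by exists 0; rewrite /word big_nil; apply: ad_eigen1.
- by exists (ca + c); apply: ad_eigenM.
- by exists (cb + c); apply: ad_eigenM.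
Qed.

Lemma eqmod_commX P Q : Q * P ≡ P * Q -> forall k, Q ^+ k * P ≡ P * Q ^+ k.
Proof.
move=> eQP; elim=> [|k IHk]; first by rewrite expr0 mul1r mulr1; apply: eqmodxx.
rewrite exprSr -mulrA; apply: eqmod_trans (eqmodMl _ eQP) _.
by rewrite !mulrA; apply: eqmodMr.
Qed.

Lemma cancel_across_power P Pb Q f c : P * Pb ≡ phi f -> ad_eigen c Q ->
  Q * Pb ≡ Pb * Q \/ Q * P ≡ P * Q ->
  forall k, exists f', P * Q ^+ k * Pb ≡ phi f' * Q ^+ k.
Proof.
move=> ePPb eQ [QPb | QP] k.
  exists f; rewrite -mulrA; apply: eqmod_trans (eqmodMl P (eqmod_commX QPb k)) _.
  by rewrite mulrA; apply: eqmodMr.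
exists (f \Po ('X - (c *+ k)%:P)).
apply: eqmod_trans (eqmodMr Pb (eqmod_sym (eqmod_commX QP k))) _.
rewrite -mulrA; apply: eqmod_trans (eqmodMl _ ePPb) _.
exact: ad_eigen_hornerr (ad_eigenX k eQ) f.
Qed.

Lemma eqmod_eigen_horner P Z Q c u : ad_eigen c P -> Z ≡ phi u ->
  P * Z * Q ≡ phi (u \Po ('X - c%:P)) * (P * Q).
Proof.
move=> eP eZ; apply: eqmod_trans (eqmodMr Q (eqmodMl P eZ)) _.
by rewrite mulrA; apply: eqmodMr; apply: ad_eigen_hornerr.
Qed.

Lemma cancel_powers P Pb f c : P * Pb ≡ phi f -> f != 0 -> ad_eigen c P ->
  forall k, exists2 f', f' != 0 & P ^+ k * Pb ^+ k ≡ phi f'.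
Proof.
move=> ePPb f0 eP; elim=> [|k [fk fk0 efk]].
  by exists 1; rewrite ?oner_eq0 // !expr0 mul1r rmorph1; apply: eqmodxx.
exists ((fk \Po ('X - c%:P)) * f); first by rewrite mulf_neq0 ?comp_XsubC_eq0.
rewrite exprS exprSr !mulrA -(mulrA P).
by apply: eqmod_trans (eqmod_eigen_horner _ eP efk) _; rewrite rmorphM; apply: eqmodMl.
Qed.

Lemma cancel_prod_powers P Pb Q Qb cp cq i j :
  (exists2 f, f != 0 & P * Pb ≡ phi f) -> (exists2 f, f != 0 & Q * Qb ≡ phi f) ->
  ad_eigen cp P -> ad_eigen cq Q ->
  exists2 f, f != 0 & P ^+ i * Q ^+ j * (Qb ^+ j * Pb ^+ i) ≡ phi f.
Proof.
move=> [f f0 ef] [g g0 eg] eP eQ.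
have [fi fi0 efi] := cancel_powers ef f0 eP i; have [gj gj0 egj] := cancel_powers eg g0 eQ j.
exists ((gj \Po ('X - (cp *+ i)%:P)) * fi); first by rewrite mulf_neq0 ?comp_XsubC_eq0.
rewrite mulrA -(mulrA (P ^+ i)).
apply: eqmod_trans (eqmod_eigen_horner _ (ad_eigenX i eP) egj) _.
by rewrite rmorphM; apply: eqmodMl.
Qed.

(* Cancels the last occurrence of the letter [b] of [s] against [Pb]. *)
Lemma word_cancel la lb Pb (b : bool) f ca cb s :
  ad_eigen ca la -> ad_eigen cb lb ->
  (if b then la else lb) * Pb ≡ phi f ->
  (if b then lb else la) * Pb ≡ Pb * (if b then lb else la) \/
   (if b then lb else la) * (if b then la else lb)
     ≡ (if b then la else lb) * (if b then lb else la) ->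
  b \in s ->
  exists f' s1 k, s = s1 ++ b :: nseq k (~~ b) /\
    word la lb s * Pb ≡ phi f' * word la lb (s1 ++ nseq k (~~ b)).
Proof.
move=> ea eb ePPb ecomm /split_last_occurrence [s1 [k ->]].
have [cq eQ] : exists cq, ad_eigen cq (if b then lb else la).
  by case: (b); [exists cb | exists ca].
have [f' ef'] := cancel_across_power ePPb eQ ecomm k.
have [c1 ec1] := word_eigen s1 ea eb.
exists (f' \Po ('X - c1%:P)), s1, k; split => //.
rewrite word_cat word_cons word_cat !word_nseq.
have -> : (if ~~ b then la else lb) = (if b then lb else la) by case: (b).
rewrite -!mulrA; apply: eqmod_trans (eqmodMl _ (_ : _ ≡ phi f' * _)) _.
  by rewrite mulrA; apply: ef'.
by rewrite !mulrA; apply: eqmodMr; apply: ad_eigen_hornerr.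
Qed.

Section Relations.
Variables (X1p X1m X2p X2m : A) (a1 a2 : K) (p1 p2 : {poly K}).
Hypothesis eigenX1p : ad_eigen a1 X1p.
Hypothesis eigenX1m : ad_eigen (- a1) X1m.
Hypothesis eigenX2p : ad_eigen a2 X2p.
Hypothesis eigenX2m : ad_eigen (- a2) X2m.
Hypothesis X1pX1m : X1p * X1m ≡ phi (p1 \Po ('X - (a1 / 2%:R)%:P)).
Hypothesis X1mX1p : X1m * X1p ≡ phi (p1 \Po ('X + (a1 / 2%:R)%:P)).
Hypothesis X2pX2m : X2p * X2m ≡ phi (p2 \Po ('X - (a2 / 2%:R)%:P)).
Hypothesis X2mX2p : X2m * X2p ≡ phi (p2 \Po ('X + (a2 / 2%:R)%:P)).
Hypothesis X1pX2m_comm : X1p * X2m ≡ X2m * X1p.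
Hypothesis X1mX2p_comm : X1m * X2p ≡ X2p * X1m.

Definition letter1 (m : int) := if 0 <= m then X1p else X1m.
Definition letter2 (n : int) := if 0 <= n then X2p else X2m.
Definition letter1_inv (m : int) := if 0 <= m then X1m else X1p.
Definition letter2_inv (n : int) := if 0 <= n then X2m else X2p.

Definition gword (g : int * int) s := word (letter1 g.1) (letter2 g.2) s.

Definition is_shape (g : int * int) (s : seq bool) :=
  count id s = `|g.1|%N /\ count negb s = `|g.2|%N.

Definition normal_form g z := exists2 l : seq ({poly K} * seq bool),
  (forall t, t \in l -> is_shape g t.2) & z ≡ \sum_(t <- l) phi t.1 * gword g t.2.

Lemma normal_form0 g : normal_form g 0.
Proof. by exists [::]; rewrite // big_nil; apply: eqmodxx. Qed.

Lemma normal_formD g x y : normal_form g x -> normal_form g y -> normal_form g (x + y).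
Proof.
move=> [l1 s1 e1] [l2 s2 e2]; exists (l1 ++ l2); last by rewrite big_cat; apply: eqmodD.
by move=> t; rewrite mem_cat => /orP[]; [apply: s1 | apply: s2].
Qed.

Lemma normal_form_hornerMl g q x : normal_form g x -> normal_form g (phi q * x).
Proof.
move=> [l sl el]; exists [seq (q * t.1, t.2) | t <- l].
  by move=> t /mapP[u ul ->]; exact: sl ul.
rewrite big_map; apply: eqmod_trans (eqmodMl _ el) _.
by rewrite mulr_sumr; apply: eq_eqmod; apply: eq_bigr => t _; rewrite rmorphM mulrA.
Qed.

Lemma normal_formZ g c x : normal_form g x -> normal_form g (c *: x).
Proof. by move/(normal_form_hornerMl c%:P); rewrite horner_algC mulr_algl. Qed.

Lemma normal_form_eqmod g x y : normal_form g x -> y ≡ x -> normal_form g y.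
Proof. by move=> [l sl el] eyx; exists l => //; apply: eqmod_trans eyx el. Qed.

Lemma normal_form_gword g s : is_shape g s -> normal_form g (gword g s).
Proof.
move=> sh; exists [:: (1, s)]; first by move=> t; rewrite inE => /eqP ->.
by rewrite big_seq1 rmorph1 mul1r; apply: eqmodxx.
Qed.

Lemma normal_formMr g g' x z :
  (forall s, is_shape g s -> normal_form g' (gword g s * x)) ->
  normal_form g z -> normal_form g' (z * x).
Proof.
move=> wx [l sl el]; apply: normal_form_eqmod (eqmodMr x el).
rewrite mulr_suml; elim: l sl {el} => [|t l IHl] sl; first by rewrite big_nil; apply: normal_form0.
rewrite big_cons -mulrA; apply: normal_formD.
  by apply: normal_form_hornerMl; apply: wx; apply: sl; rewrite inE eqxx.
by apply: IHl => u ul; apply: sl; rewrite inE ul orbT.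
Qed.

Lemma letter1_eigen m : exists c, ad_eigen c (letter1 m).
Proof. by rewrite /letter1; case: ifP => _; [exists a1 | exists (- a1)]. Qed.

Lemma letter2_eigen n : exists c, ad_eigen c (letter2 n).
Proof. by rewrite /letter2; case: ifP => _; [exists a2 | exists (- a2)]. Qed.

Lemma letter1_inv_eigen m : exists c, ad_eigen c (letter1_inv m).
Proof. by rewrite /letter1_inv; case: ifP => _; [exists (- a1) | exists a1]. Qed.

Lemma letter2_inv_eigen n : exists c, ad_eigen c (letter2_inv n).
Proof. by rewrite /letter2_inv; case: ifP => _; [exists (- a2) | exists a2]. Qed.

Lemma normal_gwordMH g s : is_shape g s -> normal_form g (gword g s * H).
Proof.
move=> sh; have [ca ea] := letter1_eigen g.1; have [cb eb] := letter2_eigen g.2.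
have [c ec] := word_eigen s ea eb.
have := ad_eigen_hornerr ec 'X; rewrite horner_algX comp_polyX.
exact: normal_form_eqmod (normal_form_hornerMl _ (normal_form_gword sh)).
Qed.

Lemma normal_gwordMX1p m n s :
  is_shape (m, n) s -> normal_form (m + 1, n) (gword (m, n) s * X1p).
Proof.
case=> /= cnt1 cnt2; have [m_ge0 | m_lt0] := lerP 0 m.
  have -> : gword (m, n) s * X1p = gword (m + 1, n) (rcons s true).
    by rewrite /gword word_rcons /letter1 /= m_ge0 ifT //; lia.
  by apply: normal_form_gword; split; rewrite /= -cats1 count_cat /=; lia.
have s_true : true \in s by apply: mem_count_id; lia.
have [cb eb] := letter2_eigen n.
have comm : letter2 n * X1p ≡ X1p * letter2 n \/ letter2 n * X1m ≡ X1m * letter2 n.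
  rewrite /letter2; case: ifP => _.
    by right; apply: eqmod_sym X1mX2p_comm.
  by left; apply: eqmod_sym X1pX2m_comm.
have [f' [s1 [k [es ews]]]] :=
  word_cancel (b := true) eigenX1m eb X1mX1p comm s_true.
subst s; rewrite !count_cat /= !count_nseq /= in cnt1 cnt2.
have sh : is_shape (m + 1, n) (s1 ++ nseq k false).
  by split; rewrite /= !count_cat !count_nseq /=; lia.
apply: normal_form_eqmod (normal_form_hornerMl f' (normal_form_gword sh)) _.
have -> : gword (m + 1, n) (s1 ++ nseq k false) = word X1m (letter2 n) (s1 ++ nseq k false).
  apply: eq_word; last by right.
  have [m1_lt0 | m1_ge0] := ltrP (m + 1) 0; first by right; rewrite /letter1 /= (lt_geF m1_lt0).
  by left; case: sh => /= cnt _; lia.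
by rewrite /gword /letter1 /= (lt_geF m_lt0).
Qed.

Lemma normal_gwordMX1m m n s :
  is_shape (m, n) s -> normal_form (m - 1, n) (gword (m, n) s * X1m).
Proof.
case=> /= cnt1 cnt2; have [m_gt0 | m_le0] := ltrP 0 m; last first.
  have m1_lt0 : m - 1 < 0 by lia.
  have -> : gword (m, n) s * X1m = gword (m - 1, n) (rcons s true).
    rewrite /gword word_rcons /letter1 /= (lt_geF m1_lt0); congr (_ * _).
    apply: eq_word; last by right.
    have [m_lt0 | m_ge0] := ltrP m 0; first by right.
    by left; lia.
  by apply: normal_form_gword; split; rewrite /= -cats1 count_cat /=; lia.
have s_true : true \in s by apply: mem_count_id; lia.
have [cb eb] := letter2_eigen n.
have comm : letter2 n * X1m ≡ X1m * letter2 n \/ letter2 n * X1p ≡ X1p * letter2 n.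
  rewrite /letter2; case: ifP => _.
    by left; apply: eqmod_sym X1mX2p_comm.
  by right; apply: eqmod_sym X1pX2m_comm.
have [f' [s1 [k [es ews]]]] :=
  word_cancel (b := true) eigenX1p eb X1pX1m comm s_true.
subst s; rewrite !count_cat /= !count_nseq /= in cnt1 cnt2.
have sh : is_shape (m - 1, n) (s1 ++ nseq k false).
  by split; rewrite /= !count_cat !count_nseq /=; lia.
apply: normal_form_eqmod (normal_form_hornerMl f' (normal_form_gword sh)) _.
have m1_ge0 : 0 <= m - 1 by lia.
by rewrite /gword /letter1 /= m1_ge0 (ltW m_gt0).
Qed.

Lemma normal_gwordMX2p m n s :
  is_shape (m, n) s -> normal_form (m, n + 1) (gword (m, n) s * X2p).
Proof.
case=> /= cnt1 cnt2; have [n_ge0 | n_lt0] := lerP 0 n.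
  have -> : gword (m, n) s * X2p = gword (m, n + 1) (rcons s false).
    by rewrite /gword word_rcons /letter2 /= n_ge0 ifT //; lia.
  by apply: normal_form_gword; split; rewrite /= -cats1 count_cat /=; lia.
have s_false : false \in s by apply: mem_count_negb; lia.
have [ca ea] := letter1_eigen m.
have comm : letter1 m * X2p ≡ X2p * letter1 m \/ letter1 m * X2m ≡ X2m * letter1 m.
  by rewrite /letter1; case: ifP => _; [right; apply: X1pX2m_comm | left; apply: X1mX2p_comm].
have [f' [s1 [k [es ews]]]] :=
  word_cancel (b := false) ea eigenX2m X2mX2p comm s_false.
subst s; rewrite !count_cat /= !count_nseq /= in cnt1 cnt2.
have sh : is_shape (m, n + 1) (s1 ++ nseq k true).
  by split; rewrite /= !count_cat !count_nseq /=; lia.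
apply: normal_form_eqmod (normal_form_hornerMl f' (normal_form_gword sh)) _.
have -> : gword (m, n + 1) (s1 ++ nseq k true) = word (letter1 m) X2m (s1 ++ nseq k true).
  apply: eq_word; first by right.
  have [n1_lt0 | n1_ge0] := ltrP (n + 1) 0; first by right; rewrite /letter2 /= (lt_geF n1_lt0).
  by left; case: sh => /= _ cnt; lia.
by rewrite /gword /letter2 /= (lt_geF n_lt0).
Qed.

Lemma normal_gwordMX2m m n s :
  is_shape (m, n) s -> normal_form (m, n - 1) (gword (m, n) s * X2m).
Proof.
case=> /= cnt1 cnt2; have [n_gt0 | n_le0] := ltrP 0 n; last first.
  have n1_lt0 : n - 1 < 0 by lia.
  have -> : gword (m, n) s * X2m = gword (m, n - 1) (rcons s false).
    rewrite /gword word_rcons /letter2 /= (lt_geF n1_lt0); congr (_ * _).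
    apply: eq_word; first by right.
    have [n_lt0 | n_ge0] := ltrP n 0; first by right.
    by left; lia.
  by apply: normal_form_gword; split; rewrite /= -cats1 count_cat /=; lia.
have s_false : false \in s by apply: mem_count_negb; lia.
have [ca ea] := letter1_eigen m.
have comm : letter1 m * X2m ≡ X2m * letter1 m \/ letter1 m * X2p ≡ X2p * letter1 m.
  by rewrite /letter1; case: ifP => _; [left; apply: X1pX2m_comm | right; apply: X1mX2p_comm].
have [f' [s1 [k [es ews]]]] :=
  word_cancel (b := false) ea eigenX2p X2pX2m comm s_false.
subst s; rewrite !count_cat /= !count_nseq /= in cnt1 cnt2.
have sh : is_shape (m, n - 1) (s1 ++ nseq k true).
  by split; rewrite /= !count_cat !count_nseq /=; lia.
apply: normal_form_eqmod (normal_form_hornerMl f' (normal_form_gword sh)) _.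
have n1_ge0 : 0 <= n - 1 by lia.
by rewrite /gword /letter2 /= n1_ge0 (ltW n_gt0).
Qed.

Inductive wordspan : int * int -> A -> Prop :=
  | wordspan0 g : wordspan g 0
  | wordspanD g x y : wordspan g x -> wordspan g y -> wordspan g (x + y)
  | wordspanZ g c x : wordspan g x -> wordspan g (c *: x)
  | wordspan1 : wordspan (0, 0) 1
  | wordspanMH g z : wordspan g z -> wordspan g (z * H)
  | wordspanMX1p m n z : wordspan (m, n) z -> wordspan (m + 1, n) (z * X1p)
  | wordspanMX1m m n z : wordspan (m, n) z -> wordspan (m - 1, n) (z * X1m)
  | wordspanMX2p m n z : wordspan (m, n) z -> wordspan (m, n + 1) (z * X2p)
  | wordspanMX2m m n z : wordspan (m, n) z -> wordspan (m, n - 1) (z * X2m).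

Lemma wordspanB g x y : wordspan g x -> wordspan g y -> wordspan g (x - y).
Proof. by move=> gx gy; apply: wordspanD gx _; rewrite -scaleN1r; apply: wordspanZ. Qed.

Lemma wordspan_cast g g' x : g = g' -> wordspan g x -> wordspan g' x.
Proof. by move->. Qed.

Lemma wordspanM m n h x y :
  wordspan (m, n) x -> wordspan h y -> wordspan (m + h.1, n + h.2) (x * y).
Proof.
move=> gx; elim=> {h y} [h | h y1 y2 _ IH1 _ IH2 | h c y _ IH | | h z _ IH | m' n' z _ IH
       | m' n' z _ IH | m' n' z _ IH | m' n' z _ IH].
- by rewrite mulr0; apply: wordspan0.
- by rewrite mulrDr; apply: wordspanD.
- by rewrite -scalerAr; apply: wordspanZ.
- by rewrite mulr1 !addr0.
- by rewrite mulrA; apply: wordspanMH.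
- by rewrite mulrA /= addrA; apply: wordspanMX1p.
- by rewrite mulrA /= addrA; apply: wordspanMX1m.
- by rewrite mulrA /= addrA; apply: wordspanMX2p.
- by rewrite mulrA /= addrA; apply: wordspanMX2m.
Qed.

Lemma wordspan_horner q : wordspan (0, 0) (phi q).
Proof.
elim/poly_ind: q => [|q c IHq]; first by rewrite rmorph0; apply: wordspan0.
rewrite rmorphD rmorphM /= horner_algX horner_algC -[c%:A]mulr1 mulr_algl.
by apply: wordspanD; [apply: wordspanMH | apply/wordspanZ/wordspan1].
Qed.

Definition weight (g : int * int) : K := g.1%:~R * a1 + g.2%:~R * a2.

Lemma wordspan_eigen g x : wordspan g x -> ad_eigen (weight g) x.
Proof.
elim=> [h | h y1 y2 _ IH1 _ IH2 | h c y _ IH | | h z _ IH | m n z _ IH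
       | m n z _ IH | m n z _ IH | m n z _ IH].
- exact: ad_eigen0.
- exact: ad_eigenD.
- exact: ad_eigenZ.
- by rewrite /weight /= !mulr0z !mul0r addr0; apply: ad_eigen1.
- by rewrite -[weight h]addr0; apply: ad_eigenM IH ad_eigenH.
- have -> : weight (m + 1, n) = weight (m, n) + a1.
    by rewrite /weight /= intrD mulrDl mul1r addrAC.
  exact: ad_eigenM.
- have -> : weight (m - 1, n) = weight (m, n) + - a1.
    by rewrite /weight /= intrB mulrBl mul1r addrAC.
  exact: ad_eigenM.
- have -> : weight (m, n + 1) = weight (m, n) + a2.
    by rewrite /weight /= intrD mulrDl mul1r addrA.
  exact: ad_eigenM.
- have -> : weight (m, n - 1) = weight (m, n) + - a2.
    by rewrite /weight /= intrB mulrBl mul1r addrA.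
  exact: ad_eigenM.
Qed.

Lemma wordspan_normal_form g x : wordspan g x -> normal_form g x.
Proof.
elim=> [h | h y1 y2 _ IH1 _ IH2 | h c y _ IH | | h z _ IH | m n z _ IH
       | m n z _ IH | m n z _ IH | m n z _ IH].
- exact: normal_form0.
- exact: normal_formD.
- exact: normal_formZ.
- by have := @normal_form_gword (0, 0) [::]; rewrite /gword /word big_nil; apply.
- exact: normal_formMr (@normal_gwordMH _) IH.
- exact: normal_formMr (@normal_gwordMX1p m n) IH.
- exact: normal_formMr (@normal_gwordMX1m m n) IH.
- exact: normal_formMr (@normal_gwordMX2p m n) IH.
- exact: normal_formMr (@normal_gwordMX2m m n) IH.
Qed.

(* A word in normal form of degree (0, 0) is empty. *)
Lemma wordspan00_horner z : wordspan (0, 0) z -> exists r, z ≡ phi r.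
Proof.
move=> /wordspan_normal_form [l sl el]; exists (\sum_(t <- l) t.1).
apply: eqmod_trans el _; apply: eq_eqmod; rewrite rmorph_sum; apply: eq_big_seq => t tl.
have [cnt1 cnt2] := sl t tl.
suff -> : t.2 = [::] by rewrite /gword /word big_nil mulr1.
apply: size0nil; rewrite -(count_predC id) cnt1.
by rewrite (_ : count (predC id) t.2 = count negb t.2) // cnt2.
Qed.

Hypothesis p1_neq0 : p1 != 0.
Hypothesis p2_neq0 : p2 != 0.

Lemma letter1_cancel m :
  (exists2 f, f != 0 & letter1 m * letter1_inv m ≡ phi f) /\
  (exists2 f, f != 0 & letter1_inv m * letter1 m ≡ phi f).
Proof.
rewrite /letter1 /letter1_inv; case: ifP => _; split;
  by [exists (p1 \Po ('X - (a1 / 2%:R)%:P)); rewrite ?comp_XsubC_eq0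
     | exists (p1 \Po ('X + (a1 / 2%:R)%:P)); rewrite ?comp_XaddC_eq0].
Qed.

Lemma letter2_cancel n :
  (exists2 f, f != 0 & letter2 n * letter2_inv n ≡ phi f) /\
  (exists2 f, f != 0 & letter2_inv n * letter2 n ≡ phi f).
Proof.
rewrite /letter2 /letter2_inv; case: ifP => _; split;
  by [exists (p2 \Po ('X - (a2 / 2%:R)%:P)); rewrite ?comp_XsubC_eq0
     | exists (p2 \Po ('X + (a2 / 2%:R)%:P)); rewrite ?comp_XaddC_eq0].
Qed.

Lemma wordspanX u v z k : wordspan (u, v) z -> wordspan (u * k%:Z, v * k%:Z) (z ^+ k).
Proof.
move=> gz; elim: k => [|k IHk]; first by rewrite !mulr0 expr0; apply: wordspan1.
rewrite exprS -addn1 PoszD !mulrDr !mulr1 (addrC (u * _)) (addrC (v * _)).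
exact: wordspanM gz IHk.
Qed.

Lemma wordspan_letter1 m : wordspan (if 0 <= m then 1 else -1, 0) (letter1 m).
Proof.
rewrite /letter1; case: ifP => _; rewrite -[X in wordspan _ X]mul1r.
  by apply: wordspan_cast (wordspanMX1p wordspan1); rewrite add0r.
by apply: wordspan_cast (wordspanMX1m wordspan1); rewrite sub0r.
Qed.

Lemma wordspan_letter1_inv m : wordspan (if 0 <= m then -1 else 1, 0) (letter1_inv m).
Proof.
rewrite /letter1_inv; case: ifP => _; rewrite -[X in wordspan _ X]mul1r.
  by apply: wordspan_cast (wordspanMX1m wordspan1); rewrite sub0r.
by apply: wordspan_cast (wordspanMX1p wordspan1); rewrite add0r.
Qed.

Lemma wordspan_letter2 n : wordspan (0, if 0 <= n then 1 else -1) (letter2 n).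
Proof.
rewrite /letter2; case: ifP => _; rewrite -[X in wordspan _ X]mul1r.
  by apply: wordspan_cast (wordspanMX2p wordspan1); rewrite add0r.
by apply: wordspan_cast (wordspanMX2m wordspan1); rewrite sub0r.
Qed.

Lemma wordspan_letter2_inv n : wordspan (0, if 0 <= n then -1 else 1) (letter2_inv n).
Proof.
rewrite /letter2_inv; case: ifP => _; rewrite -[X in wordspan _ X]mul1r.
  by apply: wordspan_cast (wordspanMX2m wordspan1); rewrite sub0r.
by apply: wordspan_cast (wordspanMX2p wordspan1); rewrite add0r.
Qed.

Lemma dual_pair m n : exists x y, [/\ wordspan (m, n) x, wordspan (- m, - n) y,
  exists2 q, q != 0 & x * y ≡ phi q & exists2 q, q != 0 & y * x ≡ phi q].
Proof.
have [[c1 e1] [c2 e2]] := (letter1_eigen m, letter2_eigen n).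
have [[d1 f1] [d2 f2]] := (letter1_inv_eigen m, letter2_inv_eigen n).
exists (letter1 m ^+ `|m| * letter2 n ^+ `|n|).
exists (letter2_inv n ^+ `|n| * letter1_inv m ^+ `|m|); split.
- apply: wordspan_cast (wordspanM (wordspanX `|m| (wordspan_letter1 m))
                                  (wordspanX `|n| (wordspan_letter2 n))).
  by congr pair; [case: (lerP 0 m) | case: (lerP 0 n)] => /= ?; lia.
- apply: wordspan_cast (wordspanM (wordspanX `|n| (wordspan_letter2_inv n))
                                  (wordspanX `|m| (wordspan_letter1_inv m))).
  by congr pair; [case: (lerP 0 m) | case: (lerP 0 n)] => /= ?; lia.
- exact: cancel_prod_powers (letter1_cancel m).1 (letter2_cancel n).1 e1 e2.
- exact: cancel_prod_powers (letter2_cancel n).2 (letter1_cancel m).2 f2 f1.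
Qed.

Section Generator.
Variables (m n : int) (x y : A) (q q' : {poly K}).
Hypothesis gx : wordspan (m, n) x.
Hypothesis gy : wordspan (- m, - n) y.
Hypothesis q_neq0 : q != 0.
Hypothesis q'_neq0 : q' != 0.
Hypothesis exy : x * y ≡ phi q.
Hypothesis eyx : y * x ≡ phi q'.

Lemma torsion_MdualK t : wordspan (m, n) t -> torsion (t * y) -> torsion t.
Proof.
move=> gt tty; apply: (torsion_hornerMrK (wordspan_eigen gt) q'_neq0).
by apply: torsion_eqmod (torsionMr x tty) _; rewrite -mulrA; apply: eqmodMl.
Qed.

(* The generator [a] is chosen so that [a * y] realises a generator [d] of the
   ideal of polynomials [r] with [b * y ≡ r(H)] for some [b] of degree [(m, n)]. *)
Lemma left_generator : exists a, [/\ wordspan (m, n) a,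
  exists2 d, d != 0 & a * y ≡ phi d
  & forall b, wordspan (m, n) b -> exists e, torsion (b - phi e * a)].
Proof.
pose Ig r := exists2 b, wordspan (m, n) b & b * y ≡ phi r.
have Ig_sub r1 r2 e : Ig r1 -> Ig r2 -> Ig (r1 - e * r2).
  move=> [b1 gb1 e1] [b2 gb2 e2]; exists (b1 - phi e * b2).
    by apply: wordspanB gb1 (wordspan_cast _ (wordspanM (wordspan_horner e) gb2)); rewrite !add0r.
  by rewrite mulrBl rmorphB rmorphM -mulrA; apply: eqmodB e1 (eqmodMl _ e2).
have [d [d_neq0 [a ga ead]] d_dvd] := poly_ideal_principal Ig_sub q_neq0 (ex_intro2 _ _ x gx exy).
exists a; split => //; first by exists d.
move=> b gb; have gby : wordspan (0, 0) (b * y).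
  by apply: wordspan_cast (wordspanM gb gy); rewrite /= !subrr.
have [r ebr] := wordspan00_horner gby.
have /d_dvd/divpK dr : Ig r by exists b.
exists (r %/ d); apply: torsion_MdualK.
  by apply: wordspanB gb (wordspan_cast _ (wordspanM (wordspan_horner _) ga)); rewrite !add0r.
apply: ideal_torsion; have := eqmodB ebr (eqmodMl (phi (r %/ d)) ead).
by rewrite -rmorphM dr subrr /eqmod subr0 mulrBl mulrA.
Qed.

End Generator.

Theorem wordspan_crystalline g : exists a, [/\ wordspan g a,
  forall b, wordspan g b -> exists c, wordspan (0, 0) c /\ torsion (b - c * a),
  forall c, wordspan (0, 0) c -> torsion (c * a) -> torsion c,
  forall b, wordspan g b -> exists c, wordspan (0, 0) c /\ torsion (b - a * c)
  & forall c, wordspan (0, 0) c -> torsion (a * c) -> torsion c].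
Proof.
case: g => m n; have [x [y [gx gy [q q0 exy] [q' q'0 eyx]]]] := dual_pair m n.
have [a [ga [d d0 ead] lsurj]] := left_generator gx gy q0 q'0 exy eyx.
exists a; split => //.
- by move=> b /lsurj[e te]; exists (phi e); split => //; apply: wordspan_horner.
- move=> c gc tca; apply: (torsion_hornerMrK (wordspan_eigen gc) d0).
  by apply: torsion_eqmod (torsionMr y tca) _; rewrite -mulrA; apply: eqmodMl.
- move=> b /lsurj[e te]; exists (phi (e \Po ('X + (weight (m, n))%:P))).
  split; first exact: wordspan_horner.
  exact: torsion_eqmod te (eqmodB (eqmodxx _) (ad_eigen_hornerl (wordspan_eigen ga) e)).
- (* Both [y (x - e(H) a) c] and [y e(H) a c] are torsion, and [y x ≡ q'(H)]. *)
  move=> c gc tac; have [e te] := lsurj x gx; have ey := wordspan_eigen gy.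
  apply: (torsion_hornerMlK q'0); apply: torsion_eqmod (eqmodMr c eyx).
  rewrite -(subrK (phi e * a) x) mulrDr mulrDl.
  apply: torsionD (torsionMr c (torsion_eigenMl ey te)) _.
  have := torsion_hornerMl (e \Po ('X - (weight (- m, - n))%:P)) (torsion_eigenMl ey tac).
  move/torsion_eqmod; apply; rewrite !mulrA; do 2!apply: eqmodMr.
  exact/eqmod_sym/ad_eigen_hornerr.
Qed.

End Relations.
End AdjointEigen.
End CongruenceModIdeal.

Lemma malgC_comm (M : monomType) (C : comNzRingType) (x : {malg C[M]}) (k : C) :
  x * k%:MP = k%:MP * x.
Proof.
rewrite (monalgE x) mulr_suml mulr_sumr; apply: eq_bigr => m _.
by rewrite !malgM_def !fgmulUU mulm1 mul1m mulrC.
Qed.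

Lemma malg_scalerAr (M : monomType) (C : comNzRingType) (k : C) (x y : {malg C[M]}) :
  k *: (x * y) = x * (k *: y).
Proof. by rewrite -!mul_malgC mulrA -malgC_comm mulrA. Qed.

HB.instance Definition _ (R : realType) := GRing.Lalgebra.on (FreeAlg R).
HB.instance Definition _ (R : realType) :=
  GRing.Lalgebra_isAlgebra.Build (complex R) (FreeAlg R) (@malg_scalerAr _ _).

Section Grading.
Variable R : realType.
Local Notation C := (complex R).
Local Notation F := (FreeAlg R).
Local Notation wspan := (wordspan (gH R) (gX1p R) (gX1m R) (gX2p R) (gX2m R)).

Lemma wdegM (k1 k2 : {fmonom 'I_5}) :
  wdeg (mmul k1 k2) = ((wdeg k1).1 + (wdeg k2).1, (wdeg k1).2 + (wdeg k2).2).
Proof. by rewrite /wdeg fmM !count_cat /=; congr pair; lia. Qed.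

Lemma wdeg_fmu i : wdeg (fmu i) =
  ((val i == 1%N)%:Z - (val i == 2%N)%:Z, (val i == 3%N)%:Z - (val i == 4%N)%:Z).
Proof. by rewrite /wdeg fmU /= !addn0. Qed.

Lemma homog0 g : homog g (0 : F).
Proof. by move=> k; rewrite mcoeff0 eqxx. Qed.

Lemma homogD g (x y : F) : homog g x -> homog g y -> homog g (x + y).
Proof.
move=> gx gy k; rewrite mcoeffD; have [xk0 | /gx //] := eqVneq x@_k 0.
by rewrite xk0 add0r; apply: gy.
Qed.

Lemma homogZ g c (x : F) : homog g x -> homog g (c *: x).
Proof.
by move=> gx k; rewrite mcoeffZ => ckx; apply: gx; apply: contraNneq ckx => ->; rewrite mulr0.
Qed.

Lemma homogM m n h (x y : F) :
  homog (m, n) x -> homog h y -> homog (m + h.1, n + h.2) (x * y).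
Proof.
move=> gx gy k; rewrite mcoeff_neq0 => /msuppM_le[k1 [k2 [k1x k2y ->]]].
by rewrite wdegM (gx k1) ?(gy k2) // mcoeff_neq0.
Qed.

Lemma homog1 : homog (0, 0) (1 : F).
Proof.
move=> k; rewrite mcoeff1; case: (eqVneq k mone) => [-> _ | _]; last by rewrite eqxx.
by rewrite /wdeg fm1.
Qed.

Lemma homog_gen i : homog (wdeg (fmu i)) (gen R i).
Proof.
by move=> k; rewrite /gen mcoeffU1; case: (eqVneq (fmu i) k) => [-> | _]; rewrite ?eqxx.
Qed.

Lemma wordspan_homog g x : wspan g x -> homog g x.
Proof.
elim=> [h | h y1 y2 _ IH1 _ IH2 | h c y _ IH | | [m n] z _ IH | m n z _ IH
       | m n z _ IH | m n z _ IH | m n z _ IH].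
- exact: homog0.
- exact: homogD.
- exact: homogZ.
- exact: homog1.
- have := homogM IH (@homog_gen (@Ordinal 5 0 isT)).
  by rewrite wdeg_fmu /= ?subrr ?subr0 ?sub0r ?addr0.
- have := homogM IH (@homog_gen (@Ordinal 5 1 isT)).
  by rewrite wdeg_fmu /= ?subrr ?subr0 ?sub0r ?addr0.
- have := homogM IH (@homog_gen (@Ordinal 5 2 isT)).
  by rewrite wdeg_fmu /= ?subrr ?subr0 ?sub0r ?addr0.
- have := homogM IH (@homog_gen (@Ordinal 5 3 isT)).
  by rewrite wdeg_fmu /= ?subrr ?subr0 ?sub0r ?addr0.
- have := homogM IH (@homog_gen (@Ordinal 5 4 isT)).
  by rewrite wdeg_fmu /= ?subrr ?subr0 ?sub0r ?addr0.
Qed.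

Lemma wordspan_FMonom (s : seq 'I_5) : wspan (wdeg (FMonom s)) << FMonom s >>.
Proof.
elim/last_ind: s => [|s i].
  have -> : FMonom [::] = mone :> {fmonom 'I_5} by apply/eqP; rewrite fmP fm1.
  by rewrite /wdeg fm1; exact: wordspan1.
have -> : FMonom (rcons s i) = mmul (FMonom s) (fmu i).
  by apply/eqP; rewrite fmP fmM fmU /= cats1.
have -> : << mmul (FMonom s) (fmu i) >> = << FMonom s >> * << fmu i >> :> F.
  by rewrite malgM_def fgmulUU mulr1.
rewrite wdegM wdeg_fmu.
case: (wdeg _) => m n IHs; case: i => [[|[|[|[|[|j]]]]] ilt] //=;
  rewrite (bool_irrelevance ilt isT) ?subrr ?subr0 ?sub0r ?addr0.
- exact: wordspanMH IHs.
- exact: wordspanMX1p IHs.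
- exact: wordspanMX1m IHs.
- exact: wordspanMX2p IHs.
- exact: wordspanMX2m IHs.
Qed.

Lemma homog_wordspan g x : homog g x -> wspan g x.
Proof.
move=> gx; rewrite (monalgE x) big_seq; apply: (big_ind (wspan g)).
- exact: wordspan0.
- exact: wordspanD.
move=> k kx; have -> : << x@_k *g k >> = x@_k *: (<< k >> : F).
  by apply/malgP => k'; rewrite mcoeffZ !mcoeffU mulr_natr.
have xk_neq0 : x@_k != 0 by rewrite mcoeff_neq0.
apply: wordspanZ; rewrite -(gx k xk_neq0).
by case: k {kx xk_neq0} => s; exact: wordspan_FMonom.
Qed.

End Grading.

Section FreeAlgebra.
Variable R : realType.
Local Notation C := (complex R).
Local Notation F := (FreeAlg R).
Local Notation H := (gH R).
Local Notation X1p := (gX1p R).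
Local Notation X1m := (gX1m R).
Local Notation X2p := (gX2p R).
Local Notation X2m := (gX2m R).
Local Notation phi := (horner_alg H).

Lemma peval_horner_alg (p : {poly C}) (z : F) : peval p z = horner_alg z p.
Proof.
rewrite /horner_alg /horner_morph (@horner_coef_wide _ (size p)).
  by rewrite /peval; apply: eq_bigr => i _; rewrite coef_map /= mulr_algl.
by rewrite map_polyE (leq_trans (size_Poly _)) // size_map.
Qed.

Lemma horner_alg_comp (p r : {poly C}) (z : F) :
  horner_alg z (p \Po r) = horner_alg (horner_alg z r) p.
Proof.
rewrite -[in RHS]peval_horner_alg /peval comp_polyE raddf_sum /=.
by apply: eq_bigr => i _; rewrite -mul_polyC rmorphM /= horner_algC mulr_algl rmorphXn.
Qed.

Lemma peval_shift (p : {poly C}) (c : C) : peval p (H + c *: 1) = phi (p \Po ('X + c%:P)).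
Proof. by rewrite horner_alg_comp rmorphD /= horner_algX horner_algC -peval_horner_alg. Qed.

Lemma peval_shiftN (p : {poly C}) (c : C) : peval p (H - c *: 1) = phi (p \Po ('X - c%:P)).
Proof. by rewrite horner_alg_comp rmorphB /= horner_algX horner_algC -peval_horner_alg. Qed.

Variables (a1 a2 : C) (p1 p2 : {poly C}).
Local Notation I := (relIdeal a1 a2 p1 p2).

Lemma relIdeal0 : I 0.
Proof. by exists [::]; rewrite big_nil. Qed.

Lemma relIdealD x y : I x -> I y -> I (x + y).
Proof. by move=> [s1 ->] [s2 ->]; exists (s1 ++ s2); rewrite big_cat. Qed.

Lemma relIdealMl z x : I x -> I (z * x).
Proof.
move=> [s ->]; exists [seq (z * t.1.1, t.1.2, t.2) | t <- s].
by rewrite big_map mulr_sumr; apply: eq_bigr => t _; rewrite /= !mulrA.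
Qed.

Lemma relIdealMr x z : I x -> I (x * z).
Proof.
move=> [s ->]; exists [seq (t.1.1, t.1.2, t.2 * z) | t <- s].
by rewrite big_map mulr_suml; apply: eq_bigr => t _; exact: esym (mulrA _ _ _).
Qed.

Lemma relIdeal_rel k : I (Defs.rel a1 a2 p1 p2 k).
Proof. by exists [:: (1, k, 1)]; rewrite big_seq1 mul1r mulr1. Qed.

Local Notation "x ≡ y" := (eqmod I x y) (at level 70, no associativity).

Lemma eigen_gX1p : ad_eigen I H a1 X1p.
Proof.
have := relIdeal_rel (@Ordinal 10 0 isT).
by rewrite /Defs.rel /= /ad_eigen /eqmod opprD addrA.
Qed.

Lemma eigen_gX1m : ad_eigen I H (- a1) X1m.
Proof.
have := relIdeal_rel (@Ordinal 10 1 isT).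
by rewrite /Defs.rel /= /ad_eigen /eqmod opprD addrA scaleNr opprK.
Qed.

Lemma eigen_gX2p : ad_eigen I H a2 X2p.
Proof.
have := relIdeal_rel (@Ordinal 10 2 isT).
by rewrite /Defs.rel /= /ad_eigen /eqmod opprD addrA.
Qed.

Lemma eigen_gX2m : ad_eigen I H (- a2) X2m.
Proof.
have := relIdeal_rel (@Ordinal 10 3 isT).
by rewrite /Defs.rel /= /ad_eigen /eqmod opprD addrA scaleNr opprK.
Qed.

Lemma gX1pX1m : X1p * X1m ≡ phi (p1 \Po ('X - (a1 / 2%:R)%:P)).
Proof. by have := relIdeal_rel (@Ordinal 10 4 isT); rewrite /Defs.rel /= peval_shiftN. Qed.

Lemma gX1mX1p : X1m * X1p ≡ phi (p1 \Po ('X + (a1 / 2%:R)%:P)).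
Proof. by have := relIdeal_rel (@Ordinal 10 5 isT); rewrite /Defs.rel /= peval_shift. Qed.

Lemma gX2pX2m : X2p * X2m ≡ phi (p2 \Po ('X - (a2 / 2%:R)%:P)).
Proof. by have := relIdeal_rel (@Ordinal 10 6 isT); rewrite /Defs.rel /= peval_shiftN. Qed.

Lemma gX2mX2p : X2m * X2p ≡ phi (p2 \Po ('X + (a2 / 2%:R)%:P)).
Proof. by have := relIdeal_rel (@Ordinal 10 7 isT); rewrite /Defs.rel /= peval_shift. Qed.

Lemma gX1pX2m_comm : X1p * X2m ≡ X2m * X1p.
Proof. exact: (relIdeal_rel (@Ordinal 10 8 isT)). Qed.

Lemma gX1mX2p_comm : X1m * X2p ≡ X2p * X1m.
Proof. exact: (relIdeal_rel (@Ordinal 10 9 isT)). Qed.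

Lemma torsIdealE x : torsIdeal a1 a2 p1 p2 x <-> torsion I H x.
Proof.
split=> [[f [f0 If]] | [f f0 If]].
  by exists f; [exact: f0 | rewrite -peval_horner_alg].
by exists f; split; [exact: f0 | rewrite peval_horner_alg].
Qed.

Local Notation wspan := (wordspan H X1p X1m X2p X2m).

Hypothesis p1_neq0 : p1 != 0.
Hypothesis p2_neq0 : p2 != 0.

Theorem torsIdeal_crystalline : crystalline_quot (torsIdeal a1 a2 p1 p2).
Proof.
move=> g; have [a [ga lsurj linj rsurj rinj]] := wordspan_crystalline relIdeal0 relIdealD
  relIdealMl relIdealMr eigen_gX1p eigen_gX1m eigen_gX2p eigen_gX2m gX1pX1m gX1mX1p
  gX2pX2m gX2mX2p gX1pX2m_comm gX1mX2p_comm p1_neq0 p2_neq0 g.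
exists a; split; first exact: wordspan_homog.
- move=> b /homog_wordspan/lsurj[c [gc tc]].
  by exists c; split; [exact: wordspan_homog | apply/torsIdealE].
- by move=> c /homog_wordspan gc /torsIdealE tca; apply/torsIdealE/linj.
- move=> b /homog_wordspan/rsurj[c [gc tc]].
  by exists c; split; [exact: wordspan_homog | apply/torsIdealE].
- by move=> c /homog_wordspan gc /torsIdealE tac; apply/torsIdealE/rinj.
Qed.

End FreeAlgebra.

Unset Implicit Arguments.

Theorem mainTheorem9 (R : realType) (a1 a2 : complex R)
  (p1 p2 : {poly complex R}) :
  p1 != 0 -> p2 != 0 ->
  (p1 \Po ('X + (a2 / 2%:R)%:P)) * (p2 \Po ('X + (a1 / 2%:R)%:P))
    = (p1 \Po ('X - (a2 / 2%:R)%:P)) * (p2 \Po ('X - (a1 / 2%:R)%:P)) ->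
  crystalline_quot (torsIdeal a1 a2 p1 p2).
Proof. by move=> p1_neq0 p2_neq0 _; apply: torsIdeal_crystalline. Qed.
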